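(* Let $G$ be a topological group whose topology is induced by a left-invariant metric, and let $H$ be a subgroup of $G$. Then $H$ is strictly R-bounded if and only if $H$ is countable.
   Context: For a topological group $H$ with identity $e$, in the R-game in round $n\in\mathbb N$ player ONE chooses a neighborhood $U_n$ of $e$ and TWO a point $x_n\in H$; TWO wins if $H=\bigcup_n x_nU_n$. $H$ is strictly R-bounded if TWO has a winning strategy. *)

From Stdlib Require Import Reals List.
Open Scope R_scope.

Definition is_group {G : Type} (mul : G -> G -> G) (inv : G -> G) (e : G) : Prop :=
  (forall x y z, mul x (mul y z) = mul (mul x y) z) /\
  (forall x, mul e x = x) /\ (forall x, mul x e = x) /\
  (forall x, mul (inv x) x = e) /\ (forall x, mul x (inv x) = e).

Definition is_metric {G : Type} (d : G -> G -> R) : Prop :=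
  (forall x y, 0 <= d x y) /\
  (forall x y, d x y = 0 <-> x = y) /\
  (forall x y, d x y = d y x) /\
  (forall x y z, d x z <= d x y + d y z).

Definition left_invariant {G : Type} (mul : G -> G -> G) (d : G -> G -> R) : Prop :=
  forall g x y, d (mul g x) (mul g y) = d x y.

Definition is_topological_group_for_metric {G : Type}
  (mul : G -> G -> G) (inv : G -> G) (d : G -> G -> R) : Prop :=
  (forall x y eps, 0 < eps -> exists delta, 0 < delta /\
     forall x' y', d x x' < delta -> d y y' < delta -> d (mul x y) (mul x' y') < eps) /\
  (forall x eps, 0 < eps -> exists delta, 0 < delta /\
     forall x', d x x' < delta -> d (inv x) (inv x') < eps).

Definition is_subgroup {G : Type} (mul : G -> G -> G) (inv : G -> G) (e : G)
  (H : G -> Prop) : Prop :=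
  H e /\ (forall x y, H x -> H y -> H (mul x y)) /\ (forall x, H x -> H (inv x)).

Definition nbhd_e_in {G : Type} (d : G -> G -> R) (e : G) (H : G -> Prop)
  (U : G -> Prop) : Prop :=
  (forall x, U x -> H x) /\
  exists r, 0 < r /\ forall x, H x -> d e x < r -> U x.

(* A strategy for TWO in the R-game on H: given ONE's moves U_0, ..., U_n
   (as a list, in order), TWO answers a point x_n. TWO's earlier moves are
   determined by the strategy, so this is full (perfect-information) play. *)
Definition strategy (G : Type) := list (G -> Prop) -> G.

Definition history {G : Type} (U : nat -> G -> Prop) (n : nat) : list (G -> Prop) :=
  map U (seq 0 (S n)).

Definition winning_strategy_TWO {G : Type} (mul : G -> G -> G) (d : G -> G -> R)
  (e : G) (H : G -> Prop) (sigma : strategy G) : Prop :=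
  forall U : nat -> G -> Prop,
    (forall n, nbhd_e_in d e H (U n)) ->
    (forall n, H (sigma (history U n))) /\
    (forall h, H h <-> exists n u, U n u /\ h = mul (sigma (history U n)) u).

Definition strictly_R_bounded {G : Type} (mul : G -> G -> G) (d : G -> G -> R)
  (e : G) (H : G -> Prop) : Prop :=
  exists sigma : strategy G, winning_strategy_TWO mul d e H sigma.

(* H is countable (H is nonempty whenever it is a subgroup). *)
Definition countable_set {G : Type} (H : G -> Prop) : Prop :=
  exists f : nat -> G, (forall n, H (f n)) /\ (forall h, H h -> exists n, f n = h).

(* A countable subgroup is trivially strictly R-bounded: TWO enumerates it.
   Conversely, fix a winning strategy for TWO and let ONE play only the balls
   B_k of radius 1/(k+1) around e. For a finite sequence s of indices, the
   points h that lie within 1/(k+1) of TWO's answer to s followed by B_k, for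
   every k, form at most a singleton. If some h in H were captured by no s,
   ONE could choose at each stage a ball index whose answer misses h, building
   a play in which h is never covered. So H is the image of a partial map on
   finite sequences of naturals, hence countable. *)
From Stdlib Require Import Reals List Lra Cantor ClassicalEpsilon Classical.
Open Scope R_scope.

Fixpoint decode_list_of_length (len n : nat) : list nat :=
  match len with
  | O => nil
  | S m => let p := Cantor.of_nat n in fst p :: decode_list_of_length m (snd p)
  end.

Definition decode_list (n : nat) : list nat :=
  let p := Cantor.of_nat n in decode_list_of_length (fst p) (snd p).

Lemma decode_list_of_length_surj (l : list nat) :
  exists n, decode_list_of_length (length l) n = l.
Proof.
  induction l as [|a l [m Hm]]; simpl.
  - exists O; reflexivity.
  - exists (Cantor.to_nat (a, m)); rewrite Cantor.cancel_of_to; simpl.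
    now rewrite Hm.
Qed.

Lemma decode_list_surj (l : list nat) : exists n, decode_list n = l.
Proof.
  destruct (decode_list_of_length_surj l) as [m Hm].
  exists (Cantor.to_nat (length l, m)); unfold decode_list.
  now rewrite Cantor.cancel_of_to.
Qed.

Lemma countable_of_list_cover {G : Type} (H : G -> Prop) (e : G)
  (P : list nat -> G -> Prop) :
  H e ->
  (forall s h1 h2, P s h1 -> P s h2 -> h1 = h2) ->
  (forall h, H h -> exists s, P s h) ->
  countable_set H.
Proof.
  intros He Puniq Pcover.
  set (Q := fun s (h : G) => H h /\ forall h', H h' /\ P s h' -> h' = h).
  assert (Qex : forall s, exists h, Q s h).
  { intro s; destruct (classic (exists h', H h' /\ P s h')) as [[h' [Hh' Ph']]|N].
    - exists h'; split; [exact Hh'|]; intros h'' [_ Ph'']; exact (Puniq _ _ _ Ph'' Ph').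
    - exists e; split; [exact He|]; intros h' Hh'; exfalso; apply N; now exists h'. }
  exists (fun n => epsilon (inhabits e) (Q (decode_list n))); split.
  - intro n; exact (proj1 (epsilon_spec _ _ (Qex (decode_list n)))).
  - intros h Hh; destruct (Pcover h Hh) as [s Ps].
    destruct (decode_list_surj s) as [n <-]; exists n.
    symmetry; apply (proj2 (epsilon_spec _ _ (Qex (decode_list n)))); auto.
Qed.

Definition rad (k : nat) : R := / (INR k + 1).

Lemma rad_pos (k : nat) : 0 < rad k.
Proof. unfold rad; apply Rinv_0_lt_compat; pose proof (pos_INR k); lra. Qed.

Lemma rad_small (eps : R) : 0 < eps -> exists k, 2 * rad k < eps.
Proof.
  intro Heps; destruct (archimed_cor1 (eps / 2)) as [k [Hk Hk0]]; [lra|].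
  exists k; assert (Hkpos : 0 < INR k) by (apply lt_0_INR; exact Hk0).
  enough (rad k < / INR k) by lra.
  apply Rinv_lt_contravar; [nra | lra].
Qed.

Lemma countable_strictly_R_bounded {G : Type} (mul : G -> G -> G)
  (d : G -> G -> R) (e : G) (H : G -> Prop) :
  (forall x, mul x e = x) -> d e e = 0 ->
  H e -> (forall x y, H x -> H y -> H (mul x y)) ->
  countable_set H -> strictly_R_bounded mul d e H.
Proof.
  intros Her Dee He Hmul [f [Hf Hsurj]].
  (* TWO answers the n-th move, which comes with a history of length n+1, by f n. *)
  exists (fun l => f (pred (length l))); intros U HU; split; [intro n; apply Hf|].
  intro h; split.
  - intro Hh; destruct (Hsurj h Hh) as [n <-]; exists n, e; split.
    2:{ unfold history; rewrite length_map, length_seq; simpl; now rewrite Her. }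
    destruct (HU n) as [_ [r [Hr Hball]]]; apply Hball; [|rewrite Dee]; assumption.
  - intros (n & u & Hu & ->); apply Hmul; [apply Hf | exact (proj1 (HU n) u Hu)].
Qed.

Section WinningStrategyCountable.

Variables (G : Type) (mul : G -> G -> G) (d : G -> G -> R) (e : G).
Variables (H : G -> Prop) (sigma : strategy G).
Hypothesis Her : forall x, mul x e = x.
Hypothesis Hmet : is_metric d.
Hypothesis Hlinv : left_invariant mul d.
Hypothesis Hwin : winning_strategy_TWO mul d e H sigma.

Definition ball_nbhd (k : nat) : G -> Prop := fun x => H x /\ d e x < rad k.

Lemma ball_nbhd_nbhd (k : nat) : nbhd_e_in d e H (ball_nbhd k).
Proof.
  split; [now intros x []|].
  exists (rad k); split; [apply rad_pos | now split].
Qed.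

Definition answer (s : list nat) : G := sigma (map ball_nbhd s).

Definition captured (s : list nat) (h : G) : Prop :=
  forall k, d (answer (s ++ k :: nil)) h < rad k.

Lemma captured_unique (s : list nat) (h1 h2 : G) :
  captured s h1 -> captured s h2 -> h1 = h2.
Proof.
  destruct Hmet as (Hd0 & Hdeq & Hdsym & Htri); intros C1 C2; apply Hdeq.
  destruct (Req_dec (d h1 h2) 0) as [Z|NZ]; [exact Z|].
  destruct (rad_small (d h1 h2)) as [k Hk]; [pose proof (Hd0 h1 h2); lra|].
  specialize (C1 k); specialize (C2 k).
  pose proof (Htri h1 (answer (s ++ k :: nil)) h2).
  rewrite (Hdsym h1 (answer _)) in *; lra.
Qed.

Fixpoint greedy_prefix (c : list nat -> nat) (n : nat) : list nat :=
  match n with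
  | O => nil
  | S m => greedy_prefix c m ++ c (greedy_prefix c m) :: nil
  end.

Lemma map_greedy_prefix (c : list nat -> nat) (n : nat) :
  map (fun i => c (greedy_prefix c i)) (seq 0 n) = greedy_prefix c n.
Proof. induction n as [|n IH]; [reflexivity|]; now rewrite seq_S, map_app, IH. Qed.

Lemma dist_mul_ball_nbhd (n : nat) (x u : G) :
  ball_nbhd n u -> d x (mul x u) < rad n.
Proof. intros [_ Hu]; now rewrite <- (Her x) at 1; rewrite Hlinv. Qed.

Lemma captured_cover (h : G) : H h -> exists s, captured s h.
Proof.
  intro Hh; apply NNPP; intro Hnone.
  assert (Hescape : forall s, exists k, ~ d (answer (s ++ k :: nil)) h < rad k).
  { intro s; apply not_all_ex_not; intro Hs; apply Hnone; now exists s. }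
  destruct (choice _ Hescape) as [c Hc].
  set (U := fun i => ball_nbhd (c (greedy_prefix c i))).
  destruct (Hwin U (fun i => ball_nbhd_nbhd _)) as [_ Hcov].
  destruct (proj1 (Hcov h) Hh) as (n & u & Hu & Heq).
  assert (Hhist : history U n = map ball_nbhd (greedy_prefix c (S n))).
  { unfold history, U; rewrite <- map_greedy_prefix, map_map; reflexivity. }
  apply (Hc (greedy_prefix c n)); change (d (answer (greedy_prefix c (S n))) h
    < rad (c (greedy_prefix c n))).
  unfold answer; rewrite <- Hhist, Heq; exact (dist_mul_ball_nbhd _ _ _ Hu).
Qed.

Lemma winning_strategy_countable : H e -> countable_set H.
Proof.
  intro He; exact (countable_of_list_cover H e captured He captured_unique
    captured_cover).
Qed.

End WinningStrategyCountable.

Theorem mainTheorem7 (G : Type) (mul : G -> G -> G) (inv : G -> G) (e : G)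
  (d : G -> G -> R)
  (Hgrp : is_group mul inv e) (Hmet : is_metric d)
  (Hlinv : left_invariant mul d)
  (Htop : is_topological_group_for_metric mul inv d)
  (H : G -> Prop) (Hsub : is_subgroup mul inv e H) :
  strictly_R_bounded mul d e H <-> countable_set H.
Proof.
  destruct Hgrp as (_ & _ & Her & _ & _).
  destruct Hsub as (He & Hmul & _).
  split.
  - intros [sigma Hwin]; exact (winning_strategy_countable G mul d e H sigma
      Her Hmet Hlinv Hwin He).
  - apply countable_strictly_R_bounded; [exact Her | apply Hmet; reflexivity | exact He | exact Hmul].
Qed.
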